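(* Fix $s\geqslant2$. For $n\geqslant2$ and $k=1,\dots,n$, put $Y_{n,k}=X_{n,s,k}-p_s$. Define \[\overline Y_{n,s}=\overline X_{n,s}-p_s=\frac1n\sum_{i=1}^nY_{n,i},\qquad \overline Z_{n,s}=\frac1{n-1}\,(Y_{n,1}+\dots+Y_{n,n-1}).\] Then $F_{\overline Z_{n,s}}-F_{\overline Y_{n,s}}\to0$ uniformly on $\mathbb R$ as $n\to\infty$, where $F_X$ denotes the distribution function of a random variable $X$. The objects $X_{n,s,i}$, $\overline X_{n,s}$ and $p_s$ are defined in the context.
   Context: Consider the tiling of the plane by regular hexagons of side $1$, called cells. For an integer $s\geqslant2$, fix a cell $O$. Let $M_s$ be the set of all cells lying inside the regular hexagon that is centred at the centre of $O$, has sides of length $s\sqrt3$, and has its sides perpendicular to sides of the cells. The set $M_s$ has $m+1=1+3s(s-1)$ cells. Number the cells other than $O$ as $v_1,\dots,v_m$. Two cells are neighbours if they share a side. A cell of $M_s$ is a boundary cell if it has fewer than six neighbours in $M_s$. For an integer $n\geqslant2$, let $\Omega_{n,s}$ be the set of $n$-tuples $f=(f_1,\dots,f_n)$ of functions $f_i:\{v_1,\dots,v_m\}\to\{0,1\}$ such that $f_1+\dots+f_n\equiv1\pmod 2$ at every cell. Equip $\Omega_{n,s}$ with the uniform probability measure $P(A)=|A|\,2^{-(n-1)m}$. A path from the centre to the boundary is a sequence of pairwise distinct cells $v_{j_1},\dots,v_{j_t}$ with the following properties: - $v_{j_1}$ is a neighbour of $O$; - $v_{j_l}$ and $v_{j_{l+1}}$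 are neighbours for each $l$; - $v_{j_t}$ is a boundary cell. The $i$-th fluid flows from the centre to the boundary for $f$ if there is such a path with $f_i(v_{j_l})=1$ for all $l$. Let $A_{n,s,i}$ be this event and $X_{n,s,i}$ its indicator. Set $\overline X_{n,s}=\frac1n\sum_{i=1}^nX_{n,s,i}$. The probability $P(A_{n,s,i})$ does not depend on $n$ or $i$; denote it by $p_s$. *)

From HB Require Import structures.
From mathcomp Require Import all_boot all_order all_algebra.
From mathcomp Require Import boolp reals.
Set Implicit Arguments. Unset Strict Implicit. Unset Printing Implicit Defensive.
Import Order.TTheory GRing.Theory Num.Theory.
Local Open Scope ring_scope.

(* Cells of the hexagonal tiling are indexed by axial coordinates (a,b) in Z^2;
   two cells share a side iff their difference is one of
   (+-1,0),(0,+-1),(1,-1),(-1,1), i.e. iff the hex distance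
   max(|a|,|b|,|a+b|) of the difference is 1.  M_s is the set of cells at hex
   distance <= s-1 from O = (0,0) (it has 1+3s(s-1) cells). *)

Definition hexnorm (a b : int) : nat := maxn (absz a) (maxn (absz b) (absz (a + b))).

Section Hex.
Variable s : nat.

(* window of coordinates 0 .. 2s-2, representing a = u - (s-1) *)
Definition side : nat := (s.*2).-1.
Definition coord (u : 'I_side) : int := (u : int) - (s.-1 : int).
Definition in_Ms (x : 'I_side * 'I_side) : bool :=
  (hexnorm (coord x.1) (coord x.2) <= s.-1)%N.
Definition is_cell (x : 'I_side * 'I_side) : bool :=
  in_Ms x && ~~ ((coord x.1 == 0) && (coord x.2 == 0)).

Definition cell := {x : 'I_side * 'I_side | is_cell x}.

Definition ca (c : cell) : int := coord (val c).1.
Definition cb (c : cell) : int := coord (val c).2.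

Definition adj (c d : cell) : bool := hexnorm (ca c - ca d) (cb c - cb d) == 1%N.
Definition adjO (c : cell) : bool := hexnorm (ca c) (cb c) == 1%N.
(* boundary cell: fewer than six neighbours in M_s (M_s includes O) *)
Definition boundary (c : cell) : bool :=
  (#|[set d : cell | adj c d]| + adjO c < 6)%N.
End Hex.

Definition config (n s : nat) := {ffun 'I_n -> {ffun cell s -> bool}}.

Definition Omega (n s : nat) : {set config n s} :=
  [set f : config n s | [forall c : cell s, odd #|[set i : 'I_n | f i c]|]].

Definition flows (n s : nat) (i : 'I_n) (f : config n s) : Prop :=
  exists (c : cell s) (q : seq (cell s)),
    [/\ uniq (c :: q), adjO c, path (@adj s) c q, boundary (last c q)
      & all (fun v => f i v) (c :: q)].

Section Prob.
Variable R : realType.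

Definition prob (n s : nat) (A : config n s -> bool) : R :=
  #|[set f in Omega n s | A f]|%:R / #|Omega n s|%:R.

Definition X (n s : nat) (i : 'I_n) (f : config n s) : R :=
  if `[< flows i f >] then 1 else 0.

(* p_s = P(A_{n,s,i}), which does not depend on n,i; we take n = 2, i = 1 *)
Definition p_s (s : nat) : R := prob (fun f : config 2 s => `[< flows ord0 f >]).

Definition Y (n s : nat) (k : 'I_n) (f : config n s) : R := X k f - p_s s.

Definition Ybar (n s : nat) (f : config n s) : R :=
  (n%:R)^-1 * \sum_(i < n) Y i f.

(* (Y_{n,1} + ... + Y_{n,n-1}) / (n-1); 0-based indices 0 .. n-2 *)
Definition Zbar (n s : nat) (f : config n s) : R :=
  ((n.-1)%:R)^-1 * \sum_(i < n | (i < n.-1)%N) Y i f.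

Definition cdf (n s : nat) (V : config n s -> R) (x : R) : R :=
  prob (fun f => V f <= x).
End Prob.

From HB Require Import structures.
From mathcomp Require Import all_boot all_order all_algebra.
From mathcomp Require Import boolp reals.
From mathcomp Require Import ring lra zify.
Import Order.TTheory GRing.Theory Num.Theory.
Set Implicit Arguments. Unset Strict Implicit. Unset Printing Implicit Defensive.

(* Write n = N + 1.  The parity constraint determines the last fluid from the first N,
   so under the uniform measure the first N fluids are independent and uniform on
   single-fluid patterns, and the number K of them that flow is binomial: K = k with
   weight C(N,k) a^k b^(N-k), where a and b count flowing and non-flowing patterns.
   With t = x + p_s we have Zbar <= x iff K <= N t and Ybar <= x iff K + X_n <= (N+1) t,
   and on each of the two differences of these events K is confined to a half-open
   interval of length 1, hence takes a single value.  So |F_Z(x) - F_Y(x)| is at most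
   twice the largest binomial point mass, which is at most 2/(L+1) once
   N a b >= (2L(L+1)+1)(a+b)^2: on the side of the mean towards which the terms grow,
   the ratio of consecutive terms stays above 1 - 1/(2L) for L steps, so L+1 consecutive
   terms are each at least half the first one.  If a = 0 or b = 0 all fluids behave
   alike and Zbar = Ybar.  The value of p_s plays no role. *)

Lemma linear_decay_bound (u : nat -> nat) (d n : nat) :
  (forall i, i < n -> (d - 1) * u i <= d * u i.+1) ->
  forall i, i <= n -> (d - i) * u 0 <= d * u i.
Proof.
move=> step; elim=> [|i IH] lt_in; first by rewrite subn0.
have IHi := IH (ltnW lt_in).
have stepi := step i lt_in.
have [->|d_gt0] := posnP d; first by [].
rewrite -(leq_pmul2l d_gt0).
have coef_le : d * (d - i.+1) <= (d - 1) * (d - i) by nia.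
nia.
Qed.

Section BinomialTerms.
Variables a b : nat.

Definition binom_term (N j : nat) : nat := 'C(N, j) * a ^ j * b ^ (N - j).

Lemma sum_binom_term N : \sum_(j < N.+1) binom_term N j = (a + b) ^ N.
Proof. by rewrite addnC expnDn; apply: eq_bigr => j _; rewrite /binom_term; ring. Qed.

Lemma sum_binom_term_window_le N k L :
  k + L <= N -> \sum_(i < L.+1) binom_term N (k + i) <= (a + b) ^ N.
Proof.
move=> le_kL_N; rewrite -sum_binom_term -(big_mkord xpredT (binom_term N)).
rewrite -(big_mkord xpredT (fun i => binom_term N (k + i))).
have -> : \sum_(0 <= i < L.+1) binom_term N (k + i) =
          \sum_(k <= j < k + L.+1) binom_term N j.
  by rewrite -{2}[k]add0n big_addn addKn; apply: eq_bigr => i _; rewrite addnC.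
have le_k_N1 : k <= N.+1 by lia.
rewrite (big_cat_nat (leq0n k) le_k_N1) (@big_cat_nat _ _ _ (k + L.+1) k) /=; lia.
Qed.

Lemma binom_termS N j : j < N ->
  binom_term N j.+1 * (j.+1 * b) = binom_term N j * ((N - j) * a).
Proof.
move=> lt_jN; rewrite /binom_term.
transitivity (j.+1 * 'C(N, j.+1) * a ^ j.+1 * b ^ (N - j.+1).+1).
  by rewrite (expnSr b); ring.
by rewrite mul_bin_left subnSK // expnS; ring.
Qed.

Lemma binom_ratio_near_mean N L j : j < N ->
  j * (a + b) <= N * a + L * (a + b) ->
  (2 * L * (L + 1) + 1) * (a + b) ^ 2 <= N * (a * b) ->
  (2 * L - 1) * (j.+1 * b) <= 2 * L * ((N - j) * a).
Proof.
move=> lt_jN near_mean big_N; set s := a + b in near_mean big_N.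
have eP : (N - j) * a + j * a = N * a by rewrite -mulnDl subnK // ltnW.
set P := (N - j) * a in eP *; set Q := j.+1 * b.
have eQ : Q = j * b + b by rewrite /Q mulSn addnC.
clearbody P Q; have [le_QP|lt_PQ] := leqP Q P.
  by rewrite mulnBl mul1n (leq_trans (leq_subr _ _)) // leq_mul2l le_QP orbT.
have ejs : j * s = j * a + j * b by rewrite /s mulnDr.
have PQ_gap : Q - P <= (L + 1) * s.
  rewrite mulnDl mul1n; lia.
have large_jb : 2 * L * (L + 1) * s < j * b.
  have lt_Na : N * a * b < (j * s + b) * b by rewrite ltn_pmul2r; lia.
  have le_bs : b * b <= s * s by rewrite leq_mul // /s leq_addl.
  have s_gt0 : 0 < s by rewrite /s; lia.
  rewrite -(ltn_pmul2r s_gt0); move: big_N; rewrite expnS expn1 !mulnA; nia.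
have := leq_mul (leqnn (2 * L)) PQ_gap.
rewrite mulnBr mulnBl mul1n [2 * L * (_ * s)]mulnA; lia.
Qed.

Lemma binom_term_step N L j : j < N ->
  j * (a + b) <= N * a + L * (a + b) ->
  (2 * L * (L + 1) + 1) * (a + b) ^ 2 <= N * (a * b) ->
  (2 * L - 1) * binom_term N j <= 2 * L * binom_term N j.+1.
Proof.
move=> lt_jN near_mean big_N.
have [b0|b_gt0] := posnP b; first by rewrite /binom_term b0 exp0n ?subn_gt0 // !muln0.
rewrite -(leq_pmul2r (_ : 0 < j.+1 * b)) ?muln_gt0 //.
have -> : 2 * L * binom_term N j.+1 * (j.+1 * b) = binom_term N j * (2 * L * ((N - j) * a)).
  by rewrite -mulnA binom_termS // mulnCA.
by rewrite mulnAC mulnC leq_mul2l binom_ratio_near_mean ?orbT.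
Qed.

Lemma binom_window_in_range N L k : 0 < a + b ->
  k * (a + b) <= N * a -> (2 * L * (L + 1) + 1) * (a + b) ^ 2 <= N * (a * b) ->
  k + L <= N.
Proof.
move=> s_gt0 left_of_mean big_N; set s := a + b in s_gt0 left_of_mean big_N.
have : L * s * s <= N * b * s.
  apply: leq_trans (_ : (2 * L * (L + 1) + 1) * s ^ 2 <= _).
    by rewrite -mulnA mulnn leq_mul2r; nia.
  apply: leq_trans big_N _.
  by rewrite -mulnA leq_mul2l [a * b]mulnC leq_mul2l leq_addr !orbT.
rewrite leq_pmul2r // => Ls_le_Nb.
by rewrite -(leq_pmul2r s_gt0) mulnDl; rewrite /s mulnDr in Ls_le_Nb *; lia.
Qed.

Lemma binom_term_left_of_mean_le N L k : 0 < a + b -> 0 < L ->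
  k * (a + b) <= N * a -> (2 * L * (L + 1) + 1) * (a + b) ^ 2 <= N * (a * b) ->
  L.+1 * binom_term N k <= 2 * (a + b) ^ N.
Proof.
move=> s_gt0 L_gt0 left_of_mean big_N.
have le_kL_N := binom_window_in_range s_gt0 left_of_mean big_N.
have step i : i < L ->
    (2 * L - 1) * binom_term N (k + i) <= 2 * L * binom_term N (k + i.+1).
  move=> lt_iL; rewrite addnS; apply: binom_term_step => //; first by lia.
  by rewrite mulnDl leq_add // leq_mul2r ltnW ?orbT.
have decay := linear_decay_bound (u := fun i => binom_term N (k + i)) step.
rewrite /= addn0 in decay.
rewrite -(leq_pmul2l L_gt0) mulnCA -{1}(card_ord L.+1) -sum_nat_const.
apply: leq_trans (_ : \sum_(i < L.+1) 2 * L * binom_term N (k + i) <= _).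
  apply: leq_sum => i _; apply: leq_trans (decay i _); last by rewrite -ltnS.
  by rewrite leq_mul2r; have := ltn_ord i; lia.
by rewrite -big_distrr /= mulnCA mulnA leq_mul2l sum_binom_term_window_le ?orbT.
Qed.
End BinomialTerms.

Lemma binom_term_sym a b N k : k <= N -> binom_term a b N k = binom_term b a N (N - k).
Proof. by move=> le_kN; rewrite /binom_term bin_sub // subKn //; ring. Qed.

Lemma binom_term_le N L a b k : 0 < a + b -> 0 < L ->
  (2 * L * (L + 1) + 1) * (a + b) ^ 2 <= N * (a * b) ->
  L.+1 * binom_term a b N k <= 2 * (a + b) ^ N.
Proof.
move=> s_gt0 L_gt0 big_N.
have [lt_Nk|le_kN] := ltnP N k; first by rewrite /binom_term bin_small ?muln0.
have [left_of_mean|right_of_mean] := leqP (k * (a + b)) (N * a).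
  exact: binom_term_left_of_mean_le.
rewrite binom_term_sym // addnC; apply: binom_term_left_of_mean_le => //.
all: rewrite [b + a]addnC //.
- by rewrite mulnBl !mulnDr; rewrite mulnDr in right_of_mean; lia.
- by rewrite [b * a]mulnC.
Qed.

Lemma card_ffun_count_eq (I T : finType) (A : {set T}) k :
  #|[set g : {ffun I -> T} | #|[set i | g i \in A]| == k]| =
  'C(#|I|, k) * #|A| ^ k * #|~: A| ^ (#|I| - k).
Proof.
rewrite -sum1_card (partition_big (fun g : {ffun I -> T} => [set i | g i \in A])
  (fun S : {set I} => #|S| == k)) => [|g]; last by rewrite inE.
rewrite (eq_bigr (fun _ => #|A| ^ k * #|~: A| ^ (#|I| - k))) => [|S /eqP card_S].
  rewrite sum_nat_const -card_draws mulnA; congr (_ * _ * _).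
  by apply: eq_card => S; rewrite inE.
pose F i := if i \in S then A else ~: A.
rewrite (eq_bigl (mem (family F))) => [|g]; last first.
  rewrite inE; apply/andP/familyP => [[_ /eqP def_S] i | g_F].
    by rewrite /F -def_S !inE; case: ifP; rewrite ?inE => ->.
  suff -> : [set i | g i \in A] = S by rewrite card_S.
  apply/setP => i; have := g_F i; rewrite /F inE.
  by case: (i \in S); rewrite ?inE // => /negbTE.
rewrite sum1_card card_family foldrE big_map big_enum /= (bigID (mem S)) /=.
rewrite (eq_bigr (fun _ => #|A|)) => [|i S_i]; last by rewrite /F S_i.
rewrite [X in _ * X](eq_bigr (fun _ => #|~: A|)) => [|i notS_i]; last first.
  by rewrite /F (negbTE notS_i).
by rewrite !prod_nat_const -card_S -(cardC S) addKn.
Qed.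

Section Fluids.
Variable s : nat.

Definition flowsb (g : {ffun cell s -> bool}) : bool :=
  `[< exists (c : cell s) (q : seq (cell s)),
      [/\ uniq (c :: q), adjO c, path (@adj s) c q, boundary (last c q)
        & all (fun v => g v) (c :: q)] >].

Definition flowing : {set {ffun cell s -> bool}} := [set g | flowsb g].

Variable N : nat.

Definition head_fluids (f : config N.+1 s) : {ffun 'I_N -> {ffun cell s -> bool}} :=
  [ffun i => f (widen_ord (leqnSn N) i)].

Definition parity_completion (g : {ffun 'I_N -> {ffun cell s -> bool}}) : config N.+1 s :=
  [ffun i => if unlift ord_max i is Some j then g j
             else [ffun c => ~~ odd #|[set j | g j c]|]].

Lemma Omega_head_last (f : config N.+1 s) :
  (f \in Omega N.+1 s) = [forall c, odd (#|[set j | head_fluids f j c]| + f ord_max c)].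
Proof.
rewrite inE; apply: eq_forallb => c.
rewrite -!sum1dep_card; under [in RHS]eq_bigl do rewrite ffunE.
by rewrite big_mkcond big_ord_recr /= -big_mkcond; case: (f ord_max c).
Qed.

Lemma widen_ord_lift_max (j : 'I_N) : widen_ord (leqnSn N) j = lift ord_max j.
Proof. exact/val_inj/esym/lift_max. Qed.

Lemma head_parity_completion g : head_fluids (parity_completion g) = g.
Proof. by apply/ffunP => j; rewrite !ffunE widen_ord_lift_max liftK. Qed.

Lemma parity_completion_Omega g : parity_completion g \in Omega N.+1 s.
Proof.
rewrite Omega_head_last head_parity_completion; apply/forallP => c.
by rewrite ffunE unlift_none ffunE oddD; case: (odd _).
Qed.

Lemma head_fluids_inj : {in Omega N.+1 s &, injective head_fluids}.
Proof.
move=> f1 f2 f1_Om f2_Om eq_head; apply/ffunP => i.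
case: (unliftP ord_max i) => [j ->|->].
  by have := congr1 (fun g : {ffun _ -> _} => g j) eq_head; rewrite !ffunE widen_ord_lift_max.
apply/ffunP => c; move: f1_Om f2_Om; rewrite !Omega_head_last eq_head.
move=> /forallP/(_ c) + /forallP/(_ c); rewrite !oddD.
by case: (odd _); case: (f1 ord_max c); case: (f2 ord_max c).
Qed.

Lemma card_Omega_head (P : pred {ffun 'I_N -> {ffun cell s -> bool}}) :
  #|[set f in Omega N.+1 s | P (head_fluids f)]| = #|[set g | P g]|.
Proof.
rewrite -(card_in_imset (f := head_fluids)) => [|f1 f2]; last first.
  by move=> /setIdP[f1_Om _] /setIdP[f2_Om _]; apply: head_fluids_inj.
congr #|pred_of_set _|; apply/setP => g; rewrite inE; apply/imsetP/idP.
  by move=> [f]; rewrite inE => /andP[_ Pf] ->.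
move=> Pg; exists (parity_completion g); last by rewrite head_parity_completion.
by rewrite inE parity_completion_Omega head_parity_completion.
Qed.

Definition nflow (f : config N.+1 s) : nat := #|[set j | head_fluids f j \in flowing]|.

Lemma card_Omega : #|Omega N.+1 s| = (#|flowing| + #|~: flowing|) ^ N.
Proof.
rewrite cardsC -[N in _ ^ N]card_ord -card_ffun -cardsT -(card_Omega_head xpredT).
by apply: eq_card => f; rewrite !inE andbT.
Qed.

Lemma card_Omega_nflow k :
  #|[set f in Omega N.+1 s | nflow f == k]| = binom_term #|flowing| #|~: flowing| N k.
Proof.
rewrite (card_Omega_head (fun g => #|[set j | g j \in flowing]| == k)).
by rewrite card_ffun_count_eq card_ord.
Qed.

Lemma nflow_le f : nflow f <= N.
Proof. by rewrite -[N in _ <= N]card_ord max_card. Qed.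
End Fluids.

Local Open Scope ring_scope.

Lemma dist_card_le (R : numDomainType) (T : finType) (A B : {set T}) :
  `|#|A|%:R - #|B|%:R| <= #|A :\: B|%:R + #|B :\: A|%:R :> R.
Proof.
rewrite -(cardsID B A) -(cardsID A B) setIC !natrD opprD addrACA subrr add0r.
by rewrite -[X in _ <= X + _]normr_nat -[X in _ <= _ + X]normr_nat ler_normB.
Qed.

Lemma eq_nat_window (R : realDomainType) (y : R) m n :
  y < m%:R <= y + 1 -> y < n%:R <= y + 1 -> m = n.
Proof.
move=> /andP[lt_ym le_my] /andP[lt_yn le_ny]; apply/eqP; rewrite eqn_leq.
by apply/andP; split; rewrite -ltnS -(ltr_nat R) -natr1; lra.
Qed.

Section Distribution.
Variables (R : realType) (s N : nat).

Lemma X_flowsb n (i : 'I_n) (f : config n s) : X R i f = (flowsb (f i))%:R.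
Proof. by rewrite /X /flowsb; case: (asboolP _). Qed.

Lemma sum_Y_head_fluids (f : config N.+1 s) :
  \sum_(i < N) Y R (widen_ord (leqnSn N) i) f = (nflow f)%:R - N%:R * p_s R s.
Proof.
rewrite sumrB sumr_const card_ord mulr_natl; congr (_ - _).
rewrite /nflow -sum1dep_card natr_sum [RHS]big_mkcond; apply: eq_bigr => i _.
by rewrite X_flowsb !inE ffunE; case: flowsb.
Qed.

Lemma sum_Y_but_last (f : config N.+1 s) :
  \sum_(i < N.+1 | (i < N)%N) Y R i f = (nflow f)%:R - N%:R * p_s R s.
Proof.
rewrite big_mkcond big_ord_recr /= ltnn addr0 -sum_Y_head_fluids.
by apply: eq_bigr => i _; rewrite ltn_ord.
Qed.

Lemma sum_Y (f : config N.+1 s) :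
  \sum_(i < N.+1) Y R i f = (nflow f + flowsb (f ord_max))%:R - N.+1%:R * p_s R s.
Proof.
rewrite big_ord_recr /= sum_Y_head_fluids /Y X_flowsb natrD -natr1; ring.
Qed.

Lemma Zbar_le (f : config N.+1 s) x : (0 < N)%N ->
  (Zbar R f <= x) = ((nflow f)%:R <= N%:R * (x + p_s R s)).
Proof.
move=> N_gt0; rewrite /Zbar /= sum_Y_but_last ler_pdivrMl ?ltr0n //.
by apply/idP/idP => ?; lra.
Qed.

Lemma Ybar_le (f : config N.+1 s) x :
  (Ybar R f <= x) = ((nflow f + flowsb (f ord_max))%:R <= N.+1%:R * (x + p_s R s)).
Proof.
rewrite /Ybar sum_Y ler_pdivrMl ?ltr0n //.
by apply/idP/idP => ?; lra.
Qed.

Lemma nflow_window_Zbar_not_Ybar (f : config N.+1 s) x : (0 < N)%N ->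
  Zbar R f <= x < Ybar R f ->
  N%:R * (x + p_s R s) - 1 < (nflow f)%:R <= N%:R * (x + p_s R s).
Proof.
move=> N_gt0 /andP[]; have N_pos : 0 < N%:R :> R by rewrite ltr0n.
rewrite Zbar_le // ltNge Ybar_le -natr1 mulrDl mul1r natrD.
set t := x + p_s R s => le_nflow /negP/negP; rewrite -ltNge => lt_nflow.
have t_ge0 : 0 <= t by rewrite -(pmulr_rge0 _ N_pos) (le_trans _ le_nflow).
have last_le1 : (flowsb (f ord_max))%:R <= 1 :> R by case: flowsb.
by rewrite le_nflow andbT; lra.
Qed.

Lemma nflow_window_Ybar_not_Zbar (f : config N.+1 s) x : (0 < N)%N ->
  Ybar R f <= x < Zbar R f ->
  N%:R * (x + p_s R s) < (nflow f)%:R <= N%:R * (x + p_s R s) + 1.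
Proof.
move=> N_gt0 /andP[]; have N_pos : 0 < N%:R :> R by rewrite ltr0n.
rewrite Ybar_le ltNge Zbar_le // -natr1 mulrDl mul1r natrD.
set t := x + p_s R s => le_nflow /negP/negP; rewrite -ltNge => lt_nflow.
have t_lt1 : t < 1.
  rewrite -(ltr_pM2l N_pos) mulr1 (lt_le_trans lt_nflow) // ler_nat.
  exact: nflow_le.
have last_ge0 : 0 <= (flowsb (f ord_max))%:R :> R by [].
by rewrite lt_nflow /=; lra.
Qed.

Lemma card_le_of_nflow_window (D : {set config N.+1 s}) (y M : R) :
  D \subset Omega N.+1 s ->
  (forall k, (binom_term #|flowing s| #|~: flowing s| N k)%:R <= M) ->
  {in D, forall f, y < (nflow f)%:R <= y + 1} -> #|D|%:R <= M.
Proof.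
move=> D_Om term_le window; have [->|[f0 D_f0]] := set_0Vmem D.
  by rewrite cards0 (le_trans _ (term_le 0%N)).
apply: le_trans (term_le (nflow f0)).
rewrite ler_nat -card_Omega_nflow subset_leq_card //.
apply/subsetP => f D_f; rewrite inE (subsetP D_Om) //=; apply/eqP.
exact: eq_nat_window (window f D_f) (window f0 D_f0).
Qed.

Lemma cdf_Zbar_Ybar_gap_le (M : R) x : (0 < N)%N ->
  (forall k, (binom_term #|flowing s| #|~: flowing s| N k)%:R <= M) ->
  `|cdf (@Zbar R N.+1 s) x - cdf (@Ybar R N.+1 s) x| <=
    2 * M / ((#|flowing s| + #|~: flowing s|) ^ N)%N%:R.
Proof.
move=> N_gt0 term_le; rewrite /cdf /prob -card_Omega.
set A := [set f in _ | Zbar R f <= x]; set B := [set f in _ | Ybar R f <= x].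
rewrite -mulrBl normrM [`|_^-1|]ger0_norm ?invr_ge0 // ler_wpM2r ?invr_ge0 //.
have AB : #|A :\: B|%:R <= M.
  apply: (card_le_of_nflow_window (y := N%:R * (x + p_s R s) - 1)) term_le _.
    by apply/subsetP => f /setDP[/setIdP[]].
  move=> f /setDP[/setIdP[f_Om Zf]]; rewrite inE f_Om /= -ltNge => Yf.
  by rewrite subrK; apply: nflow_window_Zbar_not_Ybar; rewrite ?Zf.
have BA : #|B :\: A|%:R <= M.
  apply: (card_le_of_nflow_window (y := N%:R * (x + p_s R s))) term_le _.
    by apply/subsetP => f /setDP[/setIdP[]].
  move=> f /setDP[/setIdP[f_Om Yf]]; rewrite inE f_Om /= -ltNge => Zf.
  by apply: nflow_window_Ybar_not_Zbar; rewrite ?Yf.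
by apply: le_trans (dist_card_le R A B) _; lra.
Qed.

Lemma Zbar_eq_Ybar_of_flowsb_const (c : bool) (f : config N.+1 s) : (0 < N)%N ->
  (forall g : {ffun cell s -> bool}, flowsb g = c) -> Zbar R f = Ybar R f.
Proof.
move=> N_gt0 const; rewrite /Zbar /Ybar /= sum_Y_but_last sum_Y.
have -> : nflow f = (c * N)%N.
  case: c const => const; rewrite /nflow ?mul1n ?mul0n.
    by rewrite -[RHS]card_ord; apply: eq_card => j; rewrite !inE const.
  by apply: eq_card0 => j; rewrite !inE const.
rewrite const natrD natrM -natr1.
have N_neq0 : N%:R != 0 :> R by rewrite pnatr_eq0 -lt0n.
have N1_neq0 : N%:R + 1 != 0 :> R by rewrite natr1 pnatr_eq0.
by case: c {const} => /=; field; rewrite N1_neq0 N_neq0.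
Qed.

Lemma cdf_Zbar_eq_Ybar_degenerate x : (0 < N)%N ->
  (#|flowing s| * #|~: flowing s| = 0)%N ->
  cdf (@Zbar R N.+1 s) x = cdf (@Ybar R N.+1 s) x.
Proof.
move=> N_gt0 /eqP; rewrite muln_eq0 => /orP[] /eqP/cards0_eq none;
  congr cdf; apply/funext => f.
  apply: (Zbar_eq_Ybar_of_flowsb_const (c := false)) => // g.
  by have := in_set0 g; rewrite -none inE.
apply: (Zbar_eq_Ybar_of_flowsb_const (c := true)) => // g.
by have := in_set0 g; rewrite -none !inE => /negbFE.
Qed.
End Distribution.

Theorem lemma3 (R : realType) (s : nat) (hs : (2 <= s)%N) :
  forall eps : R, 0 < eps ->
  exists N : nat, forall n : nat, (2 <= n)%N -> (N <= n)%N ->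
    forall x : R,
      `| cdf (@Zbar R n s) x - cdf (@Ybar R n s) x | < eps.
Proof.
move=> eps eps_gt0.
have [degenerate|] := posnP (#|flowing s| * #|~: flowing s|).
  exists 0%N => -[|N] // N_gt0 _ x.
  by rewrite cdf_Zbar_eq_Ybar_degenerate ?subrr ?normr0.
rewrite muln_gt0 => /andP[a_gt0 b_gt0].
set a := #|flowing s| in a_gt0 *; set b := #|~: flowing s| in b_gt0 *.
pose L := (Num.Def.archi_bound (4 / eps)).+1.
have L_large : 4 / eps < L%:R.
  by rewrite (lt_le_trans (archi_boundP _)) ?ler_nat // divr_ge0 // ltW.
exists ((2 * L * (L + 1) + 1) * (a + b) ^ 2).+1%N => -[|N] // _; rewrite ltnS => N_large x.
have big_N : ((2 * L * (L + 1) + 1) * (a + b) ^ 2 <= N * (a * b))%N.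
  by rewrite (leq_trans N_large) //; apply: leq_pmulr; rewrite muln_gt0 a_gt0.
have N_gt0 : (0 < N)%N.
  by rewrite (leq_trans _ N_large) // muln_gt0 addn1 expn_gt0 addn_gt0 a_gt0.
set S := ((a + b) ^ N)%N.
have S_gt0 : 0 < S%:R :> R by rewrite ltr0n expn_gt0 addn_gt0 a_gt0.
apply: le_lt_trans (cdf_Zbar_Ybar_gap_le (M := 2 * S%:R / L.+1%:R) x N_gt0 _) _.
  move=> k; rewrite ler_pdivlMr ?ltr0n // mulrC -natrM -natrM ler_nat.
  by apply: binom_term_le; rewrite ?addn_gt0 ?a_gt0.
have -> : 2 * (2 * S%:R / L.+1%:R) / S%:R = 4 / L.+1%:R :> R.
  by field; rewrite (gt_eqF S_gt0) addrC natr1 pnatr_eq0.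
move: L_large; rewrite ltr_pdivrMr // ltr_pdivrMr ?ltr0n // -natr1; lra.
Qed.
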